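(* Let $H_n$ be the normal closure in $VB_n$ of the subgroup generated by $\sigma_1,\dots,\sigma_{n-1}$. Then $H_n$ is generated by the elements $x_{k,l}$, $1\le k\neq l\le n$, and admits the presentation with these generators and defining relations $$x_{i,j}x_{k,l}=x_{k,l}x_{i,j}\quad(i,j,k,l\text{ pairwise distinct}),$$ $$x_{i,k}x_{k,j}x_{i,k}=x_{k,j}x_{i,k}x_{k,j}\quad(i,j,k\text{ pairwise distinct}).$$
   Context: The virtual braid group $VB_n$ is the group with generators $\sigma_i,\rho_i$ ($i=1,\dots,n-1$) and defining relations: $\sigma_i\sigma_{i+1}\sigma_i=\sigma_{i+1}\sigma_i\sigma_{i+1}$ ($1\le i\le n-2$); $\sigma_i\sigma_j=\sigma_j\sigma_i$ ($|i-j|\geq 2$); $\rho_i\rho_{i+1}\rho_i=\rho_{i+1}\rho_i\rho_{i+1}$ ($1\le i\le n-2$); $\rho_i\rho_j=\rho_j\rho_i$ ($|i-j|\geq 2$); $\rho_i^2=1$; $\sigma_i\rho_j=\rho_j\sigma_i$ ($|i-j|\geq2$); $\rho_i\rho_{i+1}\sigma_i=\sigma_{i+1}\rho_i\rho_{i+1}$ ($1\le i\le n-2$). $H_n$ equals the kernel of the homomorphism $\mu:VB_n\to S_n$, $\mu(\sigma_i)=1$, $\mu(\rho_i)=(i\ i{+}1)$. Elements of $VB_n$: $x_{i,i+1}=\sigma_i$; $x_{i,j}=\rho_{j-1}\cdots\rho_{i+1}\sigma_i\rho_{i+1}\cdots\rho_{j-1}$ for $1\le i<j-1\le n-1$; $x_{i+1,i}=\rho_i\sigma_i\rho_i$;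 $x_{j,i}=\rho_{j-1}\cdots\rho_{i+1}\rho_i\sigma_i\rho_i\rho_{i+1}\cdots\rho_{j-1}$ for $1\le i<j-1\le n-1$. *)

From mathcomp Require Import all_boot.
Set Implicit Arguments. Unset Strict Implicit. Unset Printing Implicit Defensive.

(* A word over generators G: letters (b, g) mean g if b = false, g^-1 if b = true. *)
Definition word (G : Type) := seq (bool * G).

Definition inv_word (G : Type) (w : word G) : word G :=
  rev (map (fun l : bool * G => (~~ l.1, l.2)) w).

Inductive grp_eq (G : Type) (R : word G -> word G -> Prop) : word G -> word G -> Prop :=
| ge_refl w : grp_eq R w w
| ge_sym u v : grp_eq R u v -> grp_eq R v u
| ge_trans u v w : grp_eq R u v -> grp_eq R v w -> grp_eq R u w
| ge_cat u u' v v' : grp_eq R u u' -> grp_eq R v v' -> grp_eq R (u ++ v) (u' ++ v')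
| ge_cancel (b : bool) (g : G) : grp_eq R [:: (b, g); (~~ b, g)] [::]
| ge_rel u v : R u v -> grp_eq R u v.

(* Generators of VB_n: Sig i = sigma_(i+1), Rho i = rho_(i+1), i : 'I_(n-1). *)
Inductive VBgen (n : nat) : Type :=
| Sig of 'I_n.-1
| Rho of 'I_n.-1.

Definition sg {n} (i : 'I_n.-1) : bool * VBgen n := (false, Sig i).
Definition rh {n} (i : 'I_n.-1) : bool * VBgen n := (false, Rho i).

Definition far (i j : nat) : bool := (i + 2 <= j) || (j + 2 <= i).

(* Defining relations of VB_n (indices shifted by one; only differences matter). *)
Inductive VBrel (n : nat) : word (VBgen n) -> word (VBgen n) -> Prop :=
| vb_braid_s (i j : 'I_n.-1) : val j = (val i).+1 ->
    VBrel [:: sg i; sg j; sg i] [:: sg j; sg i; sg j]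
| vb_comm_s (i j : 'I_n.-1) : far i j -> VBrel [:: sg i; sg j] [:: sg j; sg i]
| vb_braid_r (i j : 'I_n.-1) : val j = (val i).+1 ->
    VBrel [:: rh i; rh j; rh i] [:: rh j; rh i; rh j]
| vb_comm_r (i j : 'I_n.-1) : far i j -> VBrel [:: rh i; rh j] [:: rh j; rh i]
| vb_inv_r (i : 'I_n.-1) : VBrel [:: rh i; rh i] [::]
| vb_comm_sr (i j : 'I_n.-1) : far i j -> VBrel [:: sg i; rh j] [:: rh j; sg i]
| vb_mixed (i j : 'I_n.-1) : val j = (val i).+1 ->
    VBrel [:: rh i; rh j; sg i] [:: sg j; rh i; rh j].

Definition VBeq (n : nat) := grp_eq (@VBrel n).

(* H_n : normal closure of <sigma_1,...,sigma_(n-1)> in VB_n, i.e. the elements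
   equal to a product of conjugates c sigma_i^(+-1) c^-1. *)
Definition in_H (n : nat) (w : word (VBgen n)) : Prop :=
  exists cs : seq (word (VBgen n) * bool * 'I_n.-1),
    VBeq w (flatten [seq t.1.1 ++ (t.1.2, Sig t.2) :: inv_word t.1.1 | t <- cs]).

(* single-letter words from nat indices (always in range where used below) *)
Definition sig_at (n m : nat) : word (VBgen n) :=
  if insub m is Some i then [:: (false, Sig i)] else [::].
Definition rho_at (n m : nat) : word (VBgen n) :=
  if insub m is Some i then [:: (false, Rho i)] else [::].

(* x_{k,l} (0-based k, l : 'I_n; paper indices k+1, l+1).  With a = min, b = max:
   P = rho_(b-1) ... rho_(a+1) (ordinals), and
   x_{a,b} = P sigma_a P^rev,   x_{b,a} = P rho_a sigma_a rho_a P^rev. *)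
Definition xw (n : nat) (k l : 'I_n) : word (VBgen n) :=
  let a := minn k l in let b := maxn k l in
  let P := flatten [seq rho_at n m | m <- rev (iota a.+1 (b - a.+1))] in
  P ++ (if k < l then sig_at n a else rho_at n a ++ sig_at n a ++ rho_at n a) ++ rev P.

Definition Hgen (n : nat) := {p : 'I_n * 'I_n | p.1 != p.2}.

Definition xg (n : nat) (g : Hgen n) : word (VBgen n) := xw (val g).1 (val g).2.

Definition phi (n : nat) (u : word (Hgen n)) : word (VBgen n) :=
  flatten [seq (if l.1 then inv_word (xg l.2) else xg l.2) | l <- u].

Definition xl {n} (g : Hgen n) : bool * Hgen n := (false, g).

Inductive Hrel (n : nat) : word (Hgen n) -> word (Hgen n) -> Prop :=
| h_comm (g h : Hgen n) :
    [&& (val g).1 != (val h).1, (val g).1 != (val h).2,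
        (val g).2 != (val h).1 & (val g).2 != (val h).2] ->
    Hrel [:: xl g; xl h] [:: xl h; xl g]
| h_braid (g h : Hgen n) :
    (val g).2 = (val h).1 -> (val g).1 != (val h).2 ->
    Hrel [:: xl g; xl h; xl g] [:: xl h; xl g; xl h].

Definition Heq (n : nat) := grp_eq (@Hrel n).

(* H_n is the kernel of mu : VB_n -> S_n, and the rho-words form a transversal for it.
   Conjugation by rho_j acts on the x_{k,l} through the transposition (j j+1) of the
   indices, and x_{k,l} is a rho-conjugate of sigma_(min k l).  Hence every conjugate of a
   sigma_i is a product of x's, and the defining relations of H_n, transported along this
   action, are conjugates of the braid and far-commutation relations of the sigma's.
   Conversely, Reidemeister-Schreier rewriting (read a word from the left and replace
   sigma_i by x_{i,i+1} relabelled by the permutation of the rho's read so far) respects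
   every defining relation of VB_n and inverts phi modulo the relations of H_n, so the
   presentation is faithful. *)

From mathcomp Require Import all_boot fingroup perm zify.
From Stdlib Require Import Setoid Morphisms.
Set Implicit Arguments. Unset Strict Implicit. Unset Printing Implicit Defensive.

Section Presentation.
Variables (G : Type) (R : word G -> word G -> Prop).
Local Notation "u ~ v" := (grp_eq R u v) (at level 70).

#[export] Instance grp_eq_Equivalence : Equivalence (grp_eq R).
Proof. split; [exact: ge_refl | exact: ge_sym | exact: ge_trans]. Qed.

#[export] Instance cat_grp_eq_Proper : Proper (grp_eq R ==> grp_eq R ==> grp_eq R) cat.
Proof. by move=> u u' Hu v v' Hv; apply: ge_cat. Qed.

Lemma inv_word_cat (u v : word G) : inv_word (u ++ v) = inv_word v ++ inv_word u.
Proof. by rewrite /inv_word map_cat rev_cat. Qed.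

Lemma inv_word_cons (x : bool * G) u :
  inv_word (x :: u) = inv_word u ++ [:: (~~ x.1, x.2)].
Proof. by rewrite -cat1s inv_word_cat. Qed.

Lemma inv_wordK : involutive (@inv_word G).
Proof.
move=> u; rewrite /inv_word map_rev revK -map_comp -[RHS]map_id.
by apply: eq_map => -[b g] /=; rewrite negbK.
Qed.

Lemma cat_inv_word_r (w : word G) : w ++ inv_word w ~ [::].
Proof.
elim: w => [|[b g] w IH] /=; first reflexivity.
rewrite inv_word_cons.
have -> : (b, g) :: w ++ inv_word w ++ [:: (~~ b, g)] =
          [:: (b, g)] ++ (w ++ inv_word w) ++ [:: (~~ b, g)] by rewrite catA.
rewrite IH; exact: ge_cancel.
Qed.

Lemma cat_inv_word_l (w : word G) : inv_word w ++ w ~ [::].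
Proof. by have := cat_inv_word_r (inv_word w); rewrite inv_wordK. Qed.

Lemma inv_word_congr u v : u ~ v -> inv_word u ~ inv_word v.
Proof.
move=> uv; transitivity (inv_word u ++ v ++ inv_word v).
  by rewrite cat_inv_word_r cats0; reflexivity.
apply: ge_trans (_ : inv_word u ++ u ++ inv_word v ~ _).
  by apply: ge_cat; [reflexivity | apply: ge_cat; [symmetry | reflexivity]].
by rewrite catA cat_inv_word_l; reflexivity.
Qed.

End Presentation.

Lemma grp_eq_flatten_map (G G' : Type) (R : word G -> word G -> Prop)
    (R' : word G' -> word G' -> Prop) (f : bool * G -> word G') :
  (forall b g, grp_eq R' (f (b, g) ++ f (~~ b, g)) [::]) ->
  (forall u v, R u v -> grp_eq R' (flatten (map f u)) (flatten (map f v))) ->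
  forall u v, grp_eq R u v -> grp_eq R' (flatten (map f u)) (flatten (map f v)).
Proof.
move=> f_cancel f_rel u v; elim => {u v}.
- by move=> w; reflexivity.
- by move=> u v _ IH; symmetry.
- by move=> u v w _ IH1 _ IH2; transitivity (flatten (map f v)).
- by move=> u u' v v' _ IH1 _ IH2; rewrite !map_cat !flatten_cat IH1 IH2; reflexivity.
- by move=> b g /=; rewrite cats0; apply: f_cancel.
- exact: f_rel.
Qed.

Lemma grp_eq_map (G G' : Type) (R : word G -> word G -> Prop)
    (R' : word G' -> word G' -> Prop) (f : bool * G -> bool * G') :
  (forall b g, grp_eq R' [:: f (b, g); f (~~ b, g)] [::]) ->
  (forall u v, R u v -> grp_eq R' (map f u) (map f v)) ->
  forall u v, grp_eq R u v -> grp_eq R' (map f u) (map f v).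
Proof.
move=> f_cancel f_rel u v uv; rewrite -!(flatten_map1 f).
by apply: (grp_eq_flatten_map _ _ uv) => // u' v' /f_rel; rewrite !flatten_map1.
Qed.

Definition swap (m x : nat) : nat :=
  if x == m then m.+1 else if x == m.+1 then m else x.

Ltac swap_lia := rewrite /swap /far; repeat case: eqP; lia.

Lemma swapK m : involutive (swap m). Proof. by move=> x; swap_lia. Qed.
Lemma swap_inj m : injective (swap m). Proof. exact: inv_inj (swapK m). Qed.
Lemma swap_l m : swap m m = m.+1. Proof. by swap_lia. Qed.
Lemma swap_r m : swap m m.+1 = m. Proof. by swap_lia. Qed.
Lemma swap_id m x : x != m -> x != m.+1 -> swap m x = x.
Proof. by rewrite /swap => /negPf -> /negPf ->. Qed.
Lemma swap_ltn m x n : m.+1 < n -> x < n -> swap m x < n. Proof. by swap_lia. Qed.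

Lemma all_iota_between (P : pred nat) a b :
  (forall m, a < m < b -> P m) -> all P (iota a.+1 (b - a.+1)).
Proof. by move=> Pab; apply/allP => m; rewrite mem_iota => m_ab; apply: Pab; lia. Qed.

Lemma iota_between_split a b c : a < c < b ->
  iota a.+1 (b - a.+1) = iota a.+1 (c - a.+1) ++ c :: iota c.+1 (b - c.+1).
Proof.
move=> acb; have -> : b - a.+1 = (c - a.+1) + (b - c.+1).+1 by lia.
by rewrite iotaD; have -> : a.+1 + (c - a.+1) = c by lia.
Qed.

Lemma rev_iota_succ a d : rev (iota a d.+1) = (a + d) :: rev (iota a d).
Proof. by rewrite -addn1 iotaD rev_cat. Qed.

Lemma foldr_swap_desc_lo a b : foldr swap a (rev (iota a.+1 (b - a.+1))) = a.
Proof.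
elim: (b - a.+1) => [|d IH] //.
by rewrite rev_iota_succ /= IH swap_id //; apply/eqP; lia.
Qed.

Lemma foldr_swap_desc_hi a b : a < b -> foldr swap a.+1 (rev (iota a.+1 (b - a.+1))) = b.
Proof.
move=> lt_ab; suff -> : forall d, foldr swap a.+1 (rev (iota a.+1 d)) = a.+1 + d by lia.
by elim=> [|d IH]; rewrite ?addn0 // rev_iota_succ /= IH swap_l addnS.
Qed.

(* x_{k,l} is the conjugate of sigma_(minn k l) by the rho-word [rhos (conj_idx k l)]. *)
Definition conj_idx (k l : nat) : seq nat :=
  rev (iota (minn k l).+1 (maxn k l - (minn k l).+1)) ++ (if k < l then [::] else [:: minn k l]).

Lemma foldr_swap_conj_idx k l : k != l ->
  foldr swap (minn k l) (conj_idx k l) = k /\ foldr swap (minn k l).+1 (conj_idx k l) = l.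
Proof.
rewrite /conj_idx; case: ltngtP => // [lt_kl | lt_lk] _.
  by rewrite cats0 foldr_swap_desc_lo foldr_swap_desc_hi.
by rewrite !foldr_cat /= swap_l swap_r foldr_swap_desc_lo foldr_swap_desc_hi.
Qed.

(* Fix the tuple position by position, lowering the first wrong entry one step at a time. *)
Lemma swap_transport (n : nat) (Q : seq nat -> Prop) :
  (forall m s, m.+1 < n -> uniq s -> all (fun x => x < n) s -> Q (map (swap m) s) -> Q s) ->
  forall s, uniq s -> all (fun x => x < n) s -> Q (iota 0 (size s)) -> Q s.
Proof.
move=> Qswap s0 uniq_s0 lt_s0 Q0; set k := size s0 in Q0.
suff prefix_ok d p s : k - p <= d -> size s = k -> uniq s -> all (fun x => x < n) s ->
    take p s = iota 0 p -> Q s.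
  by apply: (prefix_ok k 0); rewrite ?subn0 ?take0.
elim: d p s => [|d IHd] p s dp size_s uniq_s lt_s pre.
  have Es : s = iota 0 p by rewrite -pre take_oversize // size_s; lia.
  by rewrite Es (_ : p = k) // -size_s Es size_iota.
have [le_kp | lt_pk] := leqP k p; first by apply: (IHd p) => //; lia.
have [e] := ubnP (nth 0 s p - p).
elim: e s size_s uniq_s lt_s pre => // e IHe s size_s uniq_s lt_s pre lt_e.
set v := nth 0 s p in lt_e.
have v_s : v \in s by apply: mem_nth; rewrite size_s.
have lt_vn : v < n by move/allP: lt_s; apply.
have le_pv : p <= v.
  move: uniq_s; rewrite -(cat_take_drop p s) (drop_nth 0) ?size_s // cat_uniq pre.
  by case/and3P=> _ /hasPn /(_ v (mem_head _ _)); rewrite mem_iota; lia.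
case: (eqVneq v p) => [Evp | nvp].
  apply: (IHd p.+1) => //; first lia.
  by rewrite (take_nth 0) ?size_s // pre -/v Evp -cats1 -addn1 iotaD.
have sv : map (swap v.-1) (iota 0 p) = iota 0 p.
  by apply: map_id_in => x; rewrite mem_iota => x_p; apply: swap_id; apply/eqP; lia.
apply: (Qswap v.-1) => //; first lia.
apply: IHe; rewrite ?size_map ?map_inj_uniq ?all_map //.
- exact: swap_inj.
- by apply/allP => x x_s /=; apply: swap_ltn; [lia | move/allP: lt_s; apply].
- by rewrite -map_take pre sv.
- by rewrite (nth_map 0) ?size_s //= -/v; swap_lia.
Qed.

Section VirtualBraidGroup.
Variable n : nat.
Local Notation N := n.-1.
Local Notation VB := (grp_eq (@VBrel n)).
Local Notation HE := (grp_eq (@Hrel n)).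
Local Notation R := (rho_at n).
Local Notation S := (sig_at n).

Lemma rho_at_lt m (lt_mN : m < N) : R m = [:: rh (Ordinal lt_mN)].
Proof. by rewrite /rho_at insubT. Qed.

Lemma sig_at_lt m (lt_mN : m < N) : S m = [:: sg (Ordinal lt_mN)].
Proof. by rewrite /sig_at insubT. Qed.

Lemma rho_at_ord (i : 'I_N) : R i = [:: rh i].
Proof. by rewrite (rho_at_lt (ltn_ord i)); congr [:: rh _]; apply: val_inj. Qed.

Lemma sig_at_ord (i : 'I_N) : S i = [:: sg i].
Proof. by rewrite (sig_at_lt (ltn_ord i)); congr [:: sg _]; apply: val_inj. Qed.

(* Relations carry a tail [w] so that they rewrite inside right-nested concatenations. *)
Lemma VBrel_cat u v w : VBrel u v -> VB (u ++ w) (v ++ w).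
Proof. by move=> uv; apply: ge_cat; [apply: ge_rel | reflexivity]. Qed.

Lemma rhoK m w : m < N -> VB (R m ++ R m ++ w) w.
Proof. by move=> lt_mN; rewrite (rho_at_lt lt_mN); exact: VBrel_cat (vb_inv_r _). Qed.

Lemma rhoK0 m : m < N -> VB (R m ++ R m) [::].
Proof. by move=> lt_mN; have := rhoK [::] lt_mN; rewrite cats0. Qed.

Lemma rho_comm m p w : m < N -> p < N -> far m p ->
  VB (R m ++ R p ++ w) (R p ++ R m ++ w).
Proof.
move=> lt_mN lt_pN mp; rewrite (rho_at_lt lt_mN) (rho_at_lt lt_pN).
exact: VBrel_cat (vb_comm_r _).
Qed.

Lemma sig_comm m p w : m < N -> p < N -> far m p ->
  VB (S m ++ S p ++ w) (S p ++ S m ++ w).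
Proof.
move=> lt_mN lt_pN mp; rewrite (sig_at_lt lt_mN) (sig_at_lt lt_pN).
exact: VBrel_cat (vb_comm_s _).
Qed.

Lemma sig_rho_comm m p w : m < N -> p < N -> far m p ->
  VB (S m ++ R p ++ w) (R p ++ S m ++ w).
Proof.
move=> lt_mN lt_pN mp; rewrite (sig_at_lt lt_mN) (rho_at_lt lt_pN).
exact: VBrel_cat (vb_comm_sr _).
Qed.

Lemma rho_braid m w : m.+1 < N ->
  VB (R m ++ R m.+1 ++ R m ++ w) (R m.+1 ++ R m ++ R m.+1 ++ w).
Proof.
move=> lt_m1N; have lt_mN := ltnW lt_m1N.
rewrite (rho_at_lt lt_mN) (rho_at_lt lt_m1N).
exact: VBrel_cat (vb_braid_r (i := Ordinal lt_mN) (j := Ordinal lt_m1N) erefl).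
Qed.

Lemma sig_braid m w : m.+1 < N ->
  VB (S m ++ S m.+1 ++ S m ++ w) (S m.+1 ++ S m ++ S m.+1 ++ w).
Proof.
move=> lt_m1N; have lt_mN := ltnW lt_m1N.
rewrite (sig_at_lt lt_mN) (sig_at_lt lt_m1N).
exact: VBrel_cat (vb_braid_s (i := Ordinal lt_mN) (j := Ordinal lt_m1N) erefl).
Qed.

Lemma rho_rho_sig m w : m.+1 < N ->
  VB (R m ++ R m.+1 ++ S m ++ w) (S m.+1 ++ R m ++ R m.+1 ++ w).
Proof.
move=> lt_m1N; have lt_mN := ltnW lt_m1N.
rewrite (rho_at_lt lt_mN) (rho_at_lt lt_m1N) (sig_at_lt lt_mN) (sig_at_lt lt_m1N).
exact: VBrel_cat (vb_mixed (i := Ordinal lt_mN) (j := Ordinal lt_m1N) erefl).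
Qed.

Lemma rho_sig_comm m p w : m < N -> p < N -> far m p ->
  VB (R p ++ S m ++ w) (S m ++ R p ++ w).
Proof. by move=> *; symmetry; apply: sig_rho_comm. Qed.

Lemma rho_rho_sig_conj m w : m.+1 < N ->
  VB (R m ++ R m.+1 ++ S m ++ R m.+1 ++ R m ++ w) (S m.+1 ++ w).
Proof.
move=> lt_m1N; rewrite rho_rho_sig // !rhoK //; [reflexivity | exact: ltnW].
Qed.

Lemma inv_rho_at m : m < N -> VB (inv_word (R m)) (R m).
Proof.
move=> lt_mN; transitivity (inv_word (R m) ++ R m ++ R m).
  by rewrite rhoK0 // cats0; reflexivity.
by rewrite catA cat_inv_word_l; reflexivity.
Qed.

Lemma conj_rho_sym j X Y : j < N -> VB (R j ++ X ++ R j) Y -> VB (R j ++ Y ++ R j) X.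
Proof.
by move=> lt_jN XY; rewrite -XY -!catA rhoK // rhoK0 // cats0; reflexivity.
Qed.

Lemma conj_rho_cat j X Y : j < N ->
  VB (R j ++ (X ++ Y) ++ R j) ((R j ++ X ++ R j) ++ (R j ++ Y ++ R j)).
Proof. by move=> lt_jN; rewrite -!catA rhoK //; reflexivity. Qed.

Lemma conj_rho_cat3 j X Y Z : j < N ->
  VB (R j ++ (X ++ Y ++ Z) ++ R j)
     ((R j ++ X ++ R j) ++ (R j ++ Y ++ R j) ++ (R j ++ Z ++ R j)).
Proof. by move=> lt_jN; rewrite -!catA !rhoK //; reflexivity. Qed.

Definition rhos (l : seq nat) : word (VBgen n) := flatten [seq R m | m <- l].

(* [rho_desc a b] is rho_(b-1) ... rho_(a+1), the conjugator occurring in [xw]. *)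
Definition rho_desc a b := rhos (rev (iota a.+1 (b - a.+1))).
Definition rho_asc a b := rhos (iota a.+1 (b - a.+1)).

Lemma rhos_cons m l : rhos (m :: l) = R m ++ rhos l. Proof. by []. Qed.

Lemma rhos_cat l1 l2 : rhos (l1 ++ l2) = rhos l1 ++ rhos l2.
Proof. by rewrite /rhos map_cat flatten_cat. Qed.

Lemma rev_rhos l : rev (rhos l) = rhos (rev l).
Proof.
have rev_R m : rev (R m) = R m by rewrite /rho_at; case: insub.
elim: l => [|m l IH] //.
by rewrite rhos_cons rev_cat IH rev_R rev_cons -cats1 rhos_cat /rhos /= cats0.
Qed.

Lemma rev_rho_desc a b : rev (rho_desc a b) = rho_asc a b.
Proof. by rewrite /rho_desc rev_rhos revK. Qed.

Lemma inv_rhos l : all (fun m => m < N) l -> VB (inv_word (rhos l)) (rhos (rev l)).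
Proof.
elim: l => [|m l IH] /=; first reflexivity.
case/andP => lt_mN lt_lN; rewrite rhos_cons inv_word_cat inv_rho_at // IH //.
by rewrite rev_cons -cats1 rhos_cat /rhos /= cats0; reflexivity.
Qed.

Lemma rho_comm_rhos j l w : j < N -> all (fun m => (m < N) && far j m) l ->
  VB (R j ++ rhos l ++ w) (rhos l ++ R j ++ w).
Proof.
move=> lt_jN; elim: l => [|m l IH] /=; first reflexivity.
case/andP => /andP [lt_mN jm] far_l.
by rewrite rhos_cons -!catA rho_comm // IH //; reflexivity.
Qed.

Lemma rho_desc_split a b c : a < c < b -> rho_desc a b = rho_desc c b ++ R c ++ rho_desc a c.
Proof.
move=> acb; rewrite /rho_desc (iota_between_split acb) rev_cat rev_cons -cats1.
by rewrite !rhos_cat /rhos /= cats0 catA.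
Qed.

Lemma rho_asc_split a b c : a < c < b -> rho_asc a b = rho_asc a c ++ R c ++ rho_asc c b.
Proof. by move=> acb; rewrite /rho_asc (iota_between_split acb) rhos_cat rhos_cons. Qed.

Lemma rho_desc_nil a : rho_desc a a.+1 = [::]. Proof. by rewrite /rho_desc subnn. Qed.
Lemma rho_asc_nil a : rho_asc a a.+1 = [::]. Proof. by rewrite /rho_asc subnn. Qed.

Lemma rho_comm_desc j a b w : j < N -> b <= N -> (j < a) || (b < j) ->
  VB (R j ++ rho_desc a b ++ w) (rho_desc a b ++ R j ++ w).
Proof.
move=> lt_jN le_bN j_out; apply: rho_comm_rhos => //; rewrite all_rev.
by apply: all_iota_between => m m_ab; apply/andP; split; rewrite /far; lia.
Qed.

Lemma rho_comm_asc j a b w : j < N -> b <= N -> (j < a) || (b < j) ->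
  VB (R j ++ rho_asc a b ++ w) (rho_asc a b ++ R j ++ w).
Proof.
move=> lt_jN le_bN j_out; apply: rho_comm_rhos => //.
by apply: all_iota_between => m m_ab; apply/andP; split; rewrite /far; lia.
Qed.

Lemma rho_desc_shift j a b w : a < j -> j.+1 < b -> b <= N ->
  VB (R j ++ rho_desc a b ++ w) (rho_desc a b ++ R j.+1 ++ w).
Proof.
move=> lt_aj lt_j1b le_bN.
rewrite (@rho_desc_split a b j.+1) ?(@rho_desc_split a j.+1 j) ?rho_desc_nil; try lia.
rewrite -!catA rho_comm_desc ?rho_braid; try lia.
by rewrite (@rho_comm_desc j.+1 a j); try lia; reflexivity.
Qed.

Lemma rho_asc_shift j a b w : a < j -> j.+1 < b -> b <= N ->
  VB (rho_asc a b ++ R j ++ w) (R j.+1 ++ rho_asc a b ++ w).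
Proof.
move=> lt_aj lt_j1b le_bN.
rewrite (@rho_asc_split a b j.+1) ?(@rho_asc_split a j.+1 j) ?rho_asc_nil ?cats0; try lia.
rewrite -!catA -(@rho_comm_asc j j.+1 b) ?rho_braid; try lia.
by rewrite -(@rho_comm_asc j.+1 a j); try lia; reflexivity.
Qed.

(** * Conjugation by rho_j permutes the x_{k,l} *)

(* For a < b, [xab true a b] is x_{a,b} and [xab false a b] is x_{b,a}; [xadj o a] is the
   corresponding x_{a,a+1} or x_{a+1,a}. *)
Definition xadj (o : bool) (a : nat) := if o then S a else R a ++ S a ++ R a.
Definition xab o a b := rho_desc a b ++ xadj o a ++ rho_asc a b.
Definition xn (k l : nat) := xab (k < l) (minn k l) (maxn k l).

Lemma xw_xn (k l : 'I_n) : xw k l = xn k l.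
Proof. by rewrite /xn /xab -rev_rho_desc. Qed.

Lemma xn_lt k l : k < l -> xn k l = xab true k l.
Proof.
by move=> lt_kl; rewrite /xn lt_kl (minn_idPl (ltnW lt_kl)) (maxn_idPr (ltnW lt_kl)).
Qed.

Lemma xn_gt k l : l < k -> xn k l = xab false l k.
Proof.
move=> lt_lk; rewrite /xn ltnNge (ltnW lt_lk).
by rewrite (minn_idPr (ltnW lt_lk)) (maxn_idPl (ltnW lt_lk)).
Qed.

Lemma xn_succ a : xn a a.+1 = S a.
Proof. by rewrite xn_lt // /xab rho_desc_nil rho_asc_nil cats0. Qed.

Lemma xn_succ_rev a : xn a.+1 a = R a ++ S a ++ R a.
Proof. by rewrite xn_gt // /xab rho_desc_nil rho_asc_nil cats0. Qed.

Lemma rho_xadj_comm p o a w : p < N -> a < N -> far p a ->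
  VB (R p ++ xadj o a ++ w) (xadj o a ++ R p ++ w).
Proof.
move=> lt_pN lt_aN pa; have ap : far a p by rewrite /far orbC.
case: o => /=; first exact: rho_sig_comm.
by rewrite -!catA rho_comm // rho_sig_comm // rho_comm //; reflexivity.
Qed.

Lemma rho_rho_xadj_conj o j w : j.+1 < N ->
  VB (R j ++ R j.+1 ++ xadj o j ++ R j.+1 ++ R j ++ w) (xadj o j.+1 ++ w).
Proof.
move=> lt_j1N; case: o => /=; first exact: rho_rho_sig_conj.
by rewrite -!catA !rho_braid // rho_rho_sig_conj //; reflexivity.
Qed.

Lemma conj_xab_far j o a b : j < N -> a < b -> b <= N ->
  [&& j != a, j != b, j.+1 != a & j.+1 != b] ->
  VB (R j ++ xab o a b ++ R j) (xab o a b).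
Proof.
move=> lt_jN lt_ab le_bN /and4P[/eqP ja /eqP jb /eqP j1a /eqP j1b]; rewrite /xab -!catA.
have [j_out | j_in] : (j < a) || (b < j) \/ a < j /\ j.+1 < b by lia.
  rewrite rho_comm_desc // rho_xadj_comm ?rho_comm_asc // ?rhoK0 ?cats0; try lia.
  - reflexivity.
  - by rewrite /far; lia.
rewrite rho_desc_shift ?rho_xadj_comm; try lia; last by rewrite /far; lia.
by rewrite -(@rho_asc_shift j a b (R j)) ?rhoK0 ?cats0; try lia; reflexivity.
Qed.

Lemma conj_xab_low j o b w : j.+1 < b -> b <= N ->
  VB (R j ++ xab o j b ++ R j ++ w) (xab o j.+1 b ++ w).
Proof.
move=> lt_j1b le_bN.
rewrite /xab (@rho_desc_split j b j.+1) ?(@rho_asc_split j b j.+1); try lia.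
rewrite rho_desc_nil rho_asc_nil /= -!catA rho_comm_desc; try lia.
by rewrite -(@rho_comm_asc j j.+1 b) ?rho_rho_xadj_conj; try lia; reflexivity.
Qed.

Lemma conj_xab_high j o a w : a < j -> j < N ->
  VB (R j ++ xab o a j ++ R j ++ w) (xab o a j.+1 ++ w).
Proof.
move=> lt_aj lt_jN.
rewrite /xab (@rho_desc_split a j.+1 j) ?(@rho_asc_split a j.+1 j); try lia.
by rewrite rho_desc_nil rho_asc_nil cats0 -!catA; reflexivity.
Qed.

(* Conjugation by rho_j is an involution, so the cases a = j.+1 and b = j.+1 are the
   inverses of the cases a = j and b = j. *)
Lemma conj_xab j o a b : j < N -> a < b -> b <= N -> (a, b) != (j, j.+1) ->
  VB (R j ++ xab o a b ++ R j) (xab o (swap j a) (swap j b)).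
Proof.
move=> lt_jN lt_ab le_bN /eqP not_adj.
have {}not_adj : ~ (a = j /\ b = j.+1) by case=> Ea Eb; apply: not_adj; rewrite Ea Eb.
have low b' : j.+1 < b' -> b' <= N -> VB (R j ++ xab o j b' ++ R j) (xab o j.+1 b').
  by move=> *; have := @conj_xab_low j o b' [::]; rewrite !cats0; apply.
have high a' : a' < j -> VB (R j ++ xab o a' j ++ R j) (xab o a' j.+1).
  by move=> *; have := @conj_xab_high j o a' [::]; rewrite !cats0; apply.
case: (eqVneq a j) => [Ea | a_j]; first subst a.
  rewrite swap_l swap_id; try (apply/eqP; lia); apply: low; lia.
case: (eqVneq a j.+1) => [Ea | a_j1]; first subst a.
  rewrite swap_r swap_id; try (apply/eqP; lia); apply: conj_rho_sym => //; apply: low; lia.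
case: (eqVneq b j) => [Eb | b_j]; first subst b.
  rewrite swap_l swap_id //; apply: high; lia.
case: (eqVneq b j.+1) => [Eb | b_j1]; first subst b.
  rewrite swap_r swap_id //; apply: conj_rho_sym => //; apply: high; lia.
rewrite !swap_id //; apply: conj_xab_far => //.
by rewrite eq_sym a_j eq_sym b_j eq_sym a_j1 eq_sym b_j1.
Qed.

Lemma conj_xn j k l : j < N -> k < n -> l < n -> k != l ->
  VB (R j ++ xn k l ++ R j) (xn (swap j k) (swap j l)).
Proof.
move=> lt_jN lt_kn lt_ln kl.
have adj : VB (R j ++ xn j j.+1 ++ R j) (xn j.+1 j).
  by rewrite xn_succ xn_succ_rev; reflexivity.
case: (ltngtP k l) => [lt_kl | lt_lk | Ekl]; last by rewrite Ekl eqxx in kl.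
- have [[Ek El] | not_adj] : k = j /\ l = j.+1 \/ ~ (k = j /\ l = j.+1) by lia.
    by subst; rewrite swap_l swap_r.
  rewrite xn_lt // xn_lt; last by swap_lia.
  by apply: conj_xab; try lia; apply/eqP => -[Ek El]; apply: not_adj.
- have [[El Ek] | not_adj] : l = j /\ k = j.+1 \/ ~ (l = j /\ k = j.+1) by lia.
    by subst; rewrite swap_l swap_r; apply: conj_rho_sym.
  rewrite xn_gt // xn_gt; last by swap_lia.
  by apply: conj_xab; try lia; apply/eqP => -[El Ek]; apply: not_adj.
Qed.

(** * The relations of H_n hold in VB_n *)

Lemma xn_swap_conj m k l : m < N -> k < n -> l < n -> k != l ->
  VB (xn k l) (R m ++ xn (swap m k) (swap m l) ++ R m).
Proof.
move=> lt_mN lt_kn lt_ln kl; symmetry.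
have := @conj_xn m (swap m k) (swap m l); rewrite !swapK (inj_eq (@swap_inj m)).
by apply; rewrite // swap_ltn //; lia.
Qed.

Lemma xn_braid i k j : i < n -> k < n -> j < n -> i != k -> k != j -> i != j ->
  VB (xn i k ++ xn k j ++ xn i k) (xn k j ++ xn i k ++ xn k j).
Proof.
move=> lt_in lt_kn lt_jn ik kj ij.
pose Q s := forall i k j, s = [:: i; k; j] ->
  VB (xn i k ++ xn k j ++ xn i k) (xn k j ++ xn i k ++ xn k j).
suff : Q [:: i; k; j] by move/(_ i k j erefl).
apply: (@swap_transport n Q) => /=.
- move=> m s lt_m1n uniq_s lt_s Qs i' k' j' Es; subst s; move: uniq_s lt_s => /=.
  rewrite !inE => distinct bounded; have lt_mN : m < N by lia.
  rewrite (@xn_swap_conj m i' k') ?(@xn_swap_conj m k' j'); try lia.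
  by rewrite -!conj_rho_cat3 // (Qs _ _ _ erefl); reflexivity.
- by rewrite !inE; lia.
- by rewrite lt_in lt_kn lt_jn.
move=> ? ? ? [<- <- <-]; rewrite !xn_succ.
by have := @sig_braid 0 [::]; rewrite !cats0; apply; lia.
Qed.

Lemma xn_comm i j k l : i < n -> j < n -> k < n -> l < n ->
  [&& i != j, i != k, i != l, j != k, j != l & k != l] ->
  VB (xn i j ++ xn k l) (xn k l ++ xn i j).
Proof.
move=> lt_in lt_jn lt_kn lt_ln distinct.
pose Q s := forall i j k l, s = [:: i; j; k; l] -> VB (xn i j ++ xn k l) (xn k l ++ xn i j).
suff : Q [:: i; j; k; l] by move/(_ i j k l erefl).
apply: (@swap_transport n Q) => /=.
- move=> m s lt_m1n uniq_s lt_s Qs i' j' k' l' Es; subst s; move: uniq_s lt_s => /=.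
  rewrite !inE => distinct' bounded; have lt_mN : m < N by lia.
  rewrite (@xn_swap_conj m i' j') ?(@xn_swap_conj m k' l'); try lia.
  by rewrite -!conj_rho_cat // (Qs _ _ _ _ erefl); reflexivity.
- by rewrite !inE; lia.
- by rewrite lt_in lt_jn lt_kn lt_ln.
move=> ? ? ? ? [<- <- <- <-]; rewrite !xn_succ.
by have := @sig_comm 0 2 [::]; rewrite !cats0; apply => //; lia.
Qed.

Definition xg_signed (l : bool * Hgen n) := if l.1 then inv_word (xg l.2) else xg l.2.

Lemma phi_cons (l : bool * Hgen n) (u : word (Hgen n)) : phi (l :: u) = xg_signed l ++ phi u.
Proof. by []. Qed.

Lemma phi_cat (u v : word (Hgen n)) : phi (u ++ v) = phi u ++ phi v.
Proof. by rewrite /phi map_cat flatten_cat. Qed.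

Lemma Hgen_neq (g : Hgen n) : nat_of_ord (val g).1 != nat_of_ord (val g).2.
Proof. by rewrite (inj_eq (@ord_inj n)); exact: valP g. Qed.

Lemma VBeq_phi_of_Heq (u v : word (Hgen n)) : HE u v -> VB (phi u) (phi v).
Proof.
apply: grp_eq_flatten_map => [[] g | u' v' [] g h].
- exact: cat_inv_word_l.
- exact: cat_inv_word_r.
- rewrite -!(inj_eq (@ord_inj n)) => distinct; rewrite /= !cats0 /xg !xw_xn.
  apply: xn_comm; rewrite ?ltn_ord // !Hgen_neq.
  by case/and4P: distinct => -> -> -> ->.
- move=> Egh ngh; rewrite /= !cats0 /xg !xw_xn -Egh.
  apply: xn_braid; rewrite ?ltn_ord ?(inj_eq (@ord_inj n)) ?Hgen_neq //.
  by rewrite Egh Hgen_neq.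
Qed.

(** * Reidemeister-Schreier rewriting *)

Lemma ord_succ_lt (i : 'I_N) : i.+1 < n.
Proof. by have := ltn_ord i; lia. Qed.

Definition ord_lo (i : 'I_N) : 'I_n := Ordinal (ltnW (ord_succ_lt i)).
Definition ord_hi (i : 'I_N) : 'I_n := Ordinal (ord_succ_lt i).

Lemma ord_loE i : val (ord_lo i) = i. Proof. by []. Qed.
Lemma ord_hiE i : val (ord_hi i) = i.+1. Proof. by []. Qed.

(* The image of rho_i under mu : VB_n -> S_n. *)
Definition transp (i : 'I_N) : {perm 'I_n} := tperm (ord_lo i) (ord_hi i).

Lemma transpE i x : val (transp i x) = swap i (val x).
Proof.
rewrite /transp; case: tpermP => [-> | -> | xlo xhi] /=; rewrite ?swap_l ?swap_r //.
by rewrite swap_id //; apply/eqP => Ex; [apply: xlo | apply: xhi]; apply: val_inj.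
Qed.

Lemma ord_lo_neq_hi (i : 'I_N) : (ord_lo i, ord_hi i).1 != (ord_lo i, ord_hi i).2.
Proof. by rewrite /= -(inj_eq val_inj) /= neq_ltn ltnSn. Qed.

(* x_{i,i+1}, whose image under [xg] is the letter [Sig i] *)
Definition gen_sig (i : 'I_N) : Hgen n := exist _ (ord_lo i, ord_hi i) (ord_lo_neq_hi i).

Lemma Hgen_eq (g h : Hgen n) :
  val (val g).1 = val (val h).1 -> val (val g).2 = val (val h).2 -> g = h.
Proof.
by move: g h => [[a b] ?] [[c d] ?] /= Ea Eb; apply: val_inj; congr pair; apply: val_inj.
Qed.

Lemma act_gen_subproof (s : {perm 'I_n}) (g : Hgen n) :
  (s (val g).1, s (val g).2).1 != (s (val g).1, s (val g).2).2.
Proof. by rewrite /= (inj_eq perm_inj); exact: valP g. Qed.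

Definition act_gen (s : {perm 'I_n}) (g : Hgen n) : Hgen n :=
  exist _ (s (val g).1, s (val g).2) (act_gen_subproof s g).

Definition act_letter s (l : bool * Hgen n) := (l.1, act_gen s l.2).

Lemma map_act_letter1 h : map (act_letter 1%g) h = h.
Proof.
rewrite -[RHS]map_id; apply: eq_map => -[b g]; congr pair.
by apply: val_inj; rewrite /= !perm1; case: (val g).
Qed.

Lemma map_act_letterM s t h :
  map (act_letter s) (map (act_letter t) h) = map (act_letter (t * s)%g) h.
Proof.
rewrite -map_comp; apply: eq_map => -[b g]; congr pair.
by apply: val_inj; rewrite /= !permM.
Qed.

Lemma Heq_act s u v : HE u v -> HE (map (act_letter s) u) (map (act_letter s) v).
Proof.
apply: grp_eq_map => [b g | u' v' [] g h]; first exact: ge_cancel.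
- by move=> distinct; apply: ge_rel; apply: h_comm; rewrite /= !(inj_eq perm_inj).
- move=> Egh ngh; apply: ge_rel; apply: h_braid; first by rewrite /= Egh.
  by rewrite /= (inj_eq perm_inj).
Qed.

(* The invariant behind the definition: [w] equals [phi (rs_split w).1] times a rho-word
   representing mu w = (rs_split w).2. *)
Fixpoint rs_split (w : word (VBgen n)) : word (Hgen n) * {perm 'I_n} :=
  match w with
  | [::] => ([::], 1%g)
  | (b, Sig i) :: w' => ((b, gen_sig i) :: (rs_split w').1, (rs_split w').2)
  | (b, Rho i) :: w' =>
      (map (act_letter (transp i)) (rs_split w').1, ((rs_split w').2 * transp i)%g)
  end.

Lemma rs_split_cat u v :
  rs_split (u ++ v) = ((rs_split u).1 ++ map (act_letter (rs_split u).2) (rs_split v).1,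
                       ((rs_split v).2 * (rs_split u).2)%g).
Proof.
elim: u => [|[b [i|i]] u IH] /=; first by rewrite map_act_letter1 mulg1; case: rs_split.
  by rewrite IH.
by rewrite IH /= map_cat map_act_letterM mulgA.
Qed.

Ltac perm_swap_lia :=
  apply/permP => x; apply: val_inj; rewrite !permM !transpE; have := ltn_ord x; swap_lia.

Lemma rs_split_rel u v : VBrel u v ->
  HE (rs_split u).1 (rs_split v).1 /\ (rs_split u).2 = (rs_split v).2.
Proof.
case=> {u v} [i j Eij | i j ij | i j Eij | i j ij | i | i j ij | i j Eij] /=;
  try have {}Eij : j = i.+1 :> nat := Eij.
- split => //; apply: ge_rel; apply: h_braid.
    by apply: val_inj; rewrite /= Eij.
  by apply/eqP => /(congr1 val) /=; lia.
- split => //; apply: ge_rel; apply: h_comm; rewrite /far in ij.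
  by apply/and4P; split; apply/eqP => /(congr1 val) /=; lia.
- by split; [reflexivity | perm_swap_lia].
- by rewrite /far in ij; split; [reflexivity | perm_swap_lia].
- by split; [reflexivity | rewrite mul1g tperm2].
- split => //; rewrite /act_letter /=.
  have -> : act_gen (transp j) (gen_sig i) = gen_sig i.
    by rewrite /far in ij; apply: Hgen_eq; rewrite /= transpE ?ord_loE ?ord_hiE; swap_lia.
  reflexivity.
- split => //; rewrite /act_letter /=.
  have -> : act_gen (transp i) (act_gen (transp j) (gen_sig i)) = gen_sig j.
    by apply: Hgen_eq; rewrite /= !transpE ?ord_loE ?ord_hiE Eij; swap_lia.
  reflexivity.
Qed.

Lemma rs_split_congr u v : VB u v ->
  HE (rs_split u).1 (rs_split v).1 /\ (rs_split u).2 = (rs_split v).2.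
Proof.
elim=> {u v}.
- by move=> w; split; [reflexivity |].
- by move=> u v _ [IH1 IH2]; split; [symmetry |].
- by move=> u v w _ [IH1 IH2] _ [IH3 IH4]; split; [transitivity (rs_split v).1 | congruence].
- move=> u u' v v' _ [IH1 IH2] _ [IH3 IH4]; rewrite !rs_split_cat /= IH2 IH4.
  by split => //; apply: ge_cat => //; apply: Heq_act.
- move=> b [i|i] /=; first by split => //; apply: ge_cancel.
  by split; [reflexivity | rewrite mul1g tperm2].
- exact: rs_split_rel.
Qed.

(** * Generation *)

Lemma xn_sig_conj k l :
  xn k l = rhos (conj_idx k l) ++ S (minn k l) ++ rev (rhos (conj_idx k l)).
Proof.
rewrite /xn /xab /xadj /conj_idx rhos_cat rev_cat !rev_rhos revK.
by case: (k < l); rewrite /= ?cats0 // -!catA.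
Qed.

Lemma conj_idx_lt k l : k < n -> l < n -> k != l ->
  (minn k l < N) && all (fun m => m < N) (conj_idx k l).
Proof.
move=> lt_kn lt_ln kl; rewrite all_cat all_rev.
apply/and3P; split; first lia.
  by apply: all_iota_between => m m_kl; lia.
by case: (k < l) => //=; rewrite andbT; lia.
Qed.

Lemma rs_split_rhos_fst L : (rs_split (rhos L)).1 = [::].
Proof.
elim: L => [|m L IH] //; rewrite rhos_cons rs_split_cat IH /rho_at.
by case: insub => [i|] /=.
Qed.

Lemma val_rs_split_rhos L x : all (fun m => m < N) L ->
  val ((rs_split (rhos L)).2 x) = foldr swap (val x) L.
Proof.
elim: L => [|m L IH] /=; first by rewrite perm1.
case/andP=> lt_mN lt_LN; rewrite rhos_cons rs_split_cat (rho_at_lt lt_mN) /=.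
by rewrite permM permM perm1 transpE IH.
Qed.

Lemma xg_rho_conj (g : Hgen n) : exists L, exists i : 'I_N,
  [/\ all (fun m => m < N) L,
      VB (xg g) (rhos L ++ (false, Sig i) :: inv_word (rhos L))
    & act_gen (rs_split (rhos L)).2 (gen_sig i) = g].
Proof.
have := Hgen_neq g; case: g => [[k l] kl] /= nkl.
have /andP[lt_iN lt_LN] := conj_idx_lt (ltn_ord k) (ltn_ord l) nkl.
exists (conj_idx k l), (Ordinal lt_iN); split => //.
  rewrite /xg xw_xn xn_sig_conj (sig_at_lt lt_iN) rev_rhos -inv_rhos //; reflexivity.
have [Elo Ehi] := foldr_swap_conj_idx nkl.
by apply: Hgen_eq; rewrite /= !val_rs_split_rhos // ?ord_loE ?ord_hiE.
Qed.

Lemma in_H_xg (g : Hgen n) : in_H (xg g).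
Proof.
have [L [i [_ Exg _]]] := xg_rho_conj g.
by exists [:: (rhos L, false, i)]; rewrite /= cats0.
Qed.

Lemma conj_xg (j : 'I_N) (g : Hgen n) : VB (R j ++ xg g ++ R j) (xg (act_gen (transp j) g)).
Proof.
rewrite /xg !xw_xn /= !transpE; apply: conj_xn; rewrite ?ltn_ord //; exact: Hgen_neq.
Qed.

Lemma conj_xg_signed (j : 'I_N) l :
  VB (R j ++ xg_signed l ++ R j) (xg_signed (act_letter (transp j) l)).
Proof.
case: l => [[] g] /=; last exact: conj_xg.
transitivity (inv_word (R j ++ xg g ++ R j)); last exact: inv_word_congr (conj_xg j g).
by rewrite inv_word_cat (inv_word_cat (xg g)) inv_rho_at // -!catA; reflexivity.
Qed.

Lemma conj_phi (j : 'I_N) u :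
  VB (R j ++ phi u ++ R j) (phi (map (act_letter (transp j)) u)).
Proof.
elim: u => [|l u IH] /=; first exact: rhoK0.
by rewrite !phi_cons conj_rho_cat // conj_xg_signed IH; reflexivity.
Qed.

Lemma phi_gen_sig b (i : 'I_N) : phi [:: (b, gen_sig i)] = [:: (b, Sig i)].
Proof. by rewrite /phi /= cats0 /xg xw_xn /= xn_succ sig_at_ord; case: b. Qed.

Lemma rho_letter b (j : 'I_N) : VB [:: (b, Rho j)] (R j).
Proof.
rewrite rho_at_ord; case: b; last reflexivity.
by have := inv_rho_at (ltn_ord j); rewrite rho_at_ord; apply.
Qed.

Lemma conj_sig_in_phi c b (i : 'I_N) : exists u, VB (c ++ (b, Sig i) :: inv_word c) (phi u).
Proof.
elim: c => [|[b' [j|j]] c [u IH]].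
- by exists [:: (b, gen_sig i)]; rewrite phi_gen_sig; reflexivity.
- exists ([:: (b', gen_sig j)] ++ u ++ [:: (~~ b', gen_sig j)]).
  by rewrite !phi_cat !phi_gen_sig -IH inv_word_cons /= -!catA; reflexivity.
- exists (map (act_letter (transp j)) u); rewrite -conj_phi -IH.
  transitivity ([:: (b', Rho j)] ++ (c ++ (b, Sig i) :: inv_word c) ++ [:: (~~ b', Rho j)]).
    by rewrite inv_word_cons /= -catA; reflexivity.
  by rewrite !rho_letter; reflexivity.
Qed.

Lemma in_H_phi (w : word (VBgen n)) : in_H w -> exists u, VB w (phi u).
Proof.
case=> cs; elim: cs w => [|[[c b] i] cs IH] w /= Ew; first by exists [::].
have [u1 E1] := conj_sig_in_phi c b i; have [u2 E2] := IH _ (ge_refl _ _).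
by exists (u1 ++ u2); rewrite phi_cat -E1 -E2.
Qed.

(** * Faithfulness *)

Lemma rs_split_conj_sig L b (i : 'I_N) : all (fun m => m < N) L ->
  let w := rhos L ++ (b, Sig i) :: inv_word (rhos L) in
  HE (rs_split w).1 [:: (b, act_gen (rs_split (rhos L)).2 (gen_sig i))] /\ (rs_split w).2 = 1%g.
Proof.
move=> lt_LN w; have [E1 E2] := rs_split_congr (inv_rhos lt_LN).
have [_ E3] := rs_split_congr (@cat_inv_word_r _ (@VBrel n) (rhos L)).
move: E3; rewrite /w !rs_split_cat /= rs_split_rhos_fst => E3; split => //.
by rewrite cat0s -cat1s (Heq_act _ E1) rs_split_rhos_fst cats0; reflexivity.
Qed.

Lemma rs_split_xg (l : bool * Hgen n) :
  HE (rs_split (xg_signed l)).1 [:: l] /\ (rs_split (xg_signed l)).2 = 1%g.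
Proof.
case: l => b g; have [L [i [lt_LN Exg Eact]]] := xg_rho_conj g.
have Econj : VB (xg_signed (b, g)) (rhos L ++ (b, Sig i) :: inv_word (rhos L)).
  case: b; rewrite /xg_signed /=; last exact: Exg.
  by rewrite (inv_word_congr Exg) inv_word_cat inv_word_cons inv_wordK -catA; reflexivity.
have [E1 E2] := rs_split_congr Econj; have [C1 C2] := rs_split_conj_sig b i lt_LN.
by split; [rewrite E1 C1 Eact; reflexivity | rewrite E2 C2].
Qed.

Lemma rs_split_phi (u : word (Hgen n)) :
  HE (rs_split (phi u)).1 u /\ (rs_split (phi u)).2 = 1%g.
Proof.
elim: u => [|l u [IH1 IH2]]; first by split; [reflexivity |].
have [X1 X2] := rs_split_xg l.
rewrite phi_cons rs_split_cat X2 map_act_letter1 IH2 mulg1 /=; split => //.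
by rewrite X1 IH1; reflexivity.
Qed.

Lemma Heq_of_VBeq_phi (u v : word (Hgen n)) : VB (phi u) (phi v) -> HE u v.
Proof.
move=> /rs_split_congr[E _]; have [Eu _] := rs_split_phi u; have [Ev _] := rs_split_phi v.
by rewrite -Eu E Ev; reflexivity.
Qed.

End VirtualBraidGroup.

Theorem proposition6p2 (n : nat) :
  (forall g : Hgen n, in_H (xg g)) /\
  (forall w : word (VBgen n), in_H w -> exists u : word (Hgen n), VBeq w (phi u)) /\
  (forall u v : word (Hgen n), VBeq (phi u) (phi v) <-> Heq u v).
Proof.
split; first exact: in_H_xg.
split; first exact: in_H_phi.
by move=> u v; split; [exact: Heq_of_VBeq_phi | exact: VBeq_phi_of_Heq].
Qed.
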